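(* Let $H$ be a real Hilbert space, $I=\{1,\dots,M\}$, let $f_i,h_i,T_i$ ($i\in I$) satisfy Assumption (A1)–(A4) and the parameters satisfy Condition (C) (both described below). Consider the sequences generated by the Distributed Accelerated Incremental Algorithm below, and assume that for each $i\in I$ the sequence $\{y^{(i)}_n\}$ is bounded. Then the sequences $\{T_i(y^{(i)}_n)\}$, $\{x_n\}$, $\{w^{(i)}_n\}$, $\{z^{(i)}_n\}$ and $\{d^{(i)}_n\}$ ($i\in I$) are bounded.
   Context: Assumption (A1): each $f_i:H\to\mathbb{R}$ is continuous and convex. (A2): each $h_i:H\to\mathbb{R}$ is convex and Fréchet differentiable, and $\nabla h_i$ is $(1/L_i)$-Lipschitz continuous for some $L_i>0$. (A3): each $T_i:H\to H$ is firmly nonexpansive, i.e. $\|T_ix-T_iy\|^2\le\langle T_ix-T_iy,x-y\rangle$ for all $x,y$. (A4): $S=\bigcap_{i=1}^M\mathrm{Fix}\,T_i\neq\emptyset$ and, with $\psi=\sum_{i=1}^M(f_i+h_i)$, $\Omega=\{\hat x\in S:\psi(\hat x)=\min_{x\in S}\psi(x)\}\neq\emptyset$. Condition (C): $\{\theta_n\},\{\lambda_n\},\{\beta_n\},\{\alpha_n\}$ are decreasing real sequences converging to $0$ with $\theta_n\in[0,1)$, $\lambda_n\in(0,2\min_{i\in I}L_i]$, $\beta_n\in(0,1]$, $\alpha_n\in(0,1]$, and: (C1) $\sum_n\alpha_n=\infty$; (C2) $\lim_n\frac{1}{\alpha_{n+1}}\big|\frac{1}{\lambda_{n+1}}-\frac{1}{\lambda_n}\big|=0$;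 (C3) $\lim_n\frac{1}{\lambda_{n+1}}\big|1-\frac{\alpha_n}{\alpha_{n+1}}\big|=0$; (C4) $\lim_n\frac{\alpha_n}{\lambda_n}=0$; (C5) $\lim_n\frac{\theta_n}{\alpha_{n+1}\lambda_{n+1}}=0$; (C6) $\frac{\lambda_n}{\lambda_{n+1}}\le\sigma$ for some $\sigma\ge1$; (C7) $\lim_n\frac{\beta_n}{\alpha_{n+1}}=0$. $\mathrm{prox}_{\lambda g}(x)=\arg\min_y\{g(y)+\frac{1}{2\lambda}\|x-y\|^2\}$. Distributed Accelerated Incremental Algorithm: choose $x_1\in H$, $w^{(i)}_0,z^{(i)}_0,u^{(i)}\in H$ and set $d^{(i)}_1=-\nabla h_i(z^{(i)}_0)$ ($i\in I$). For $n=1,2,\dots$: set $w^{(1)}_n=x_n$; for $i=1,\dots,M$ compute $z^{(i)}_n=w^{(i)}_n+\theta_n(w^{(i)}_n-w^{(i)}_{n-1})$, $d^{(i)}_{n+1}=-\nabla h_i(z^{(i)}_n)+\beta_nd^{(i)}_n$, $y^{(i)}_n=\mathrm{prox}_{\lambda_nf_i}(z^{(i)}_n+\lambda_nd^{(i)}_{n+1})$, $w^{(i+1)}_n=\alpha_nu^{(i)}+(1-\alpha_n)T_i(y^{(i)}_n)$; then set $x_{n+1}=w^{(M+1)}_n$. *)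

From HB Require Import structures.
From mathcomp Require Import all_boot all_order all_algebra.
From mathcomp Require Import all_classical all_reals all_analysis.
Set Implicit Arguments. Unset Strict Implicit. Unset Printing Implicit Defensive.
Import Order.TTheory GRing.Theory Num.Theory.
Import numFieldNormedType.Exports.
Local Open Scope classical_set_scope.
Local Open Scope ring_scope.

(* ip is an inner product on the (complete) normed space H inducing its norm:
   symmetric, linear in the first argument, and <x,x> = ||x||^2.
   A real Hilbert space is then a completeNormedModType R with such an ip. *)
Definition is_inner_product (R : realType) (H : normedModType R)
  (ip : H -> H -> R) : Prop :=
  (forall x y, ip x y = ip y x) /\
  (forall (a : R) (x y z : H), ip (a *: x + y) z = a * ip x z + ip y z) /\
  (forall x, ip x x = `|x| ^+ 2).

Definition convex_fun (R : realType) (H : normedModType R) (g : H -> R) : Prop :=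
  forall (x y : H) (t : R), 0 <= t <= 1 ->
    g (t *: x + (1 - t) *: y) <= t * g x + (1 - t) * g y.

Definition has_gradient (R : realType) (H : normedModType R)
  (ip : H -> H -> R) (g : H -> R) (gr : H -> H) : Prop :=
  forall x, differentiable g x /\ forall v, 'd g x v = ip (gr x) v.

Definition lipschitz_const (R : realType) (H : normedModType R)
  (k : R) (F : H -> H) : Prop :=
  forall x y, `|F x - F y| <= k * `|x - y|.

Definition firmly_nonexpansive (R : realType) (H : normedModType R)
  (ip : H -> H -> R) (T : H -> H) : Prop :=
  forall x y, `|T x - T y| ^+ 2 <= ip (T x - T y) (x - y).

Definition is_prox (R : realType) (H : normedModType R)
  (lam : R) (g : H -> R) (x p : H) : Prop :=
  forall q, g p + (2 * lam)^-1 * `|x - p| ^+ 2 <= g q + (2 * lam)^-1 * `|x - q| ^+ 2.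

Definition bounded_seq (R : realType) (H : normedModType R) (s : nat -> H) : Prop :=
  exists B : R, forall n, (1 <= n)%N -> `|s n| <= B.

Definition nonincr_seq (R : realType) (s : nat -> R) : Prop :=
  forall n, (1 <= n)%N -> s n.+1 <= s n.

From HB Require Import structures.
From mathcomp Require Import all_boot all_order all_algebra.
From mathcomp Require Import all_classical all_reals all_analysis.
From mathcomp Require Import zify lra.
Set Implicit Arguments. Unset Strict Implicit. Unset Printing Implicit Defensive.
Import Order.TTheory GRing.Theory Num.Theory.
Import numFieldNormedType.Exports.
Local Open Scope classical_set_scope.
Local Open Scope ring_scope.

(* Firmly nonexpansive maps are nonexpansive, so T_i(y_n^(i)) is bounded, and
   then so is each w^(i+1)_n, a convex combination of the fixed anchor u^(i)
   and T_i(y_n^(i)); this gives x and every w^(i).  The inertial point z^(i)_n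
   stays within three times the bound of w^(i), the gradient of h_i is
   Lipschitz, and the direction d^(i) obeys a recursion
   d_{n+1} = g_n + beta_n d_n with g bounded and beta_n -> 0: once
   |beta_n| < 1/2, the bound sup_{k<=N} |d_k| + 2 sup |g| propagates. *)

Section InnerProduct.
Context {R : realType} {H : normedModType R} {ip : H -> H -> R}.
Hypothesis ipP : is_inner_product ip.

Lemma ipDl (x y z : H) : ip (x + y) z = ip x z + ip y z.
Proof. by case: ipP => _ [lin _]; rewrite -{1}(scale1r x) lin mul1r. Qed.

Lemma ip0l (z : H) : ip 0 z = 0.
Proof. by apply: (addrI (ip 0 z)); rewrite addr0 -ipDl addr0. Qed.

Lemma ipNl (x z : H) : ip (- x) z = - ip x z.
Proof. by apply: (addrI (ip x z)); rewrite -ipDl !subrr ip0l. Qed.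

Lemma ip2_le_sqr_norms (a b : H) : 2 * ip a b <= `|a| ^+ 2 + `|b| ^+ 2.
Proof.
case: ipP => sym [_ sqr].
have := sqr (a - b); rewrite ipDl ipNl (sym a) (sym b) ipDl ipNl ipDl ipNl.
rewrite (sym b a) !sqr => E.
have : 0 <= `|a - b| ^+ 2 by rewrite exprn_ge0.
rewrite -E; lra.
Qed.

Lemma firmly_nonexpansive_lipschitz (T : H -> H) :
  firmly_nonexpansive ip T -> lipschitz_const 1 T.
Proof.
move=> fneT x y; rewrite mul1r -(ler_sqr (normr_ge0 _) (normr_ge0 _)).
have := fneT x y; have := ip2_le_sqr_norms (T x - T y) (x - y); lra.
Qed.

End InnerProduct.

Section BoundedSequences.
Context {R : realType} {H : normedModType R}.
Implicit Types (s g : nat -> H) (t : nat -> R).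

Lemma bounded_seq_norm_ub s :
  bounded_seq s -> exists B : R, 0 <= B /\ forall n, `|s n| <= B.
Proof.
case=> B sB; have B0 : 0 <= B by rewrite (le_trans _ (sB 1%N _)).
exists (`|s 0%N| + B); split; first by rewrite addr_ge0.
by case=> [|n]; [rewrite lerDl | rewrite (le_trans (sB _ _)) // lerDr].
Qed.

Lemma norm_prefix_ub s (N : nat) :
  exists B : R, 0 <= B /\ forall n, (n <= N)%N -> `|s n| <= B.
Proof.
exists (\sum_(k < N.+1) `|s k|); split; first exact: sumr_ge0.
move=> n nN; rewrite (bigD1 (Ordinal (nN : n < N.+1)%N)) //= lerDl.
exact: sumr_ge0.
Qed.

Lemma eq_bounded_seq s g :
  (forall n, (1 <= n)%N -> s n = g n) -> bounded_seq g -> bounded_seq s.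
Proof. by move=> sg [B gB]; exists B => n n1; rewrite sg ?gB. Qed.

Lemma bounded_seqN s : bounded_seq s -> bounded_seq (fun n => - s n).
Proof. by case=> B sB; exists B => n n1; rewrite normrN sB. Qed.

Lemma bounded_seq_succ s : bounded_seq (fun n => s n.+1) -> bounded_seq s.
Proof.
case=> B sB; exists (B + `|s 1%N|) => -[|[|n]] // _.
  by rewrite lerDr (le_trans _ (sB 1%N _)).
by rewrite (le_trans (sB n.+1 _)) // lerDl.
Qed.

Lemma bounded_seq_lipschitz (k : R) (F : H -> H) s :
  lipschitz_const k F -> bounded_seq s -> bounded_seq (fun n => F (s n)).
Proof.
move=> Fk [B sB]; exists (`|k| * B + `|F 0|) => n n1.
rewrite -[F (s n)](subrK (F 0)) (le_trans (ler_normD _ _)) // lerD2r.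
rewrite (le_trans (Fk _ _)) // subr0 (le_trans (ler_norm _)) // normrM normr_id.
by rewrite ler_wpM2l ?sB.
Qed.

Lemma bounded_seq_convex_comb t (c : H) s :
  (forall n, (1 <= n)%N -> 0 <= t n <= 1) -> bounded_seq s ->
  bounded_seq (fun n => t n *: c + (1 - t n) *: s n).
Proof.
move=> t01 [B sB]; exists (`|c| + B) => n n1.
have /andP[t0 t1] := t01 n n1.
rewrite (le_trans (ler_normD _ _)) // !normrZ ger0_norm // ger0_norm ?subr_ge0 //.
have := sB n n1; have := normr_ge0 c; have := normr_ge0 (s n); nra.
Qed.

(* The case n = 1 looks back at s 0, which bounded_seq does not control. *)
Lemma bounded_seq_extrapolate t s :
  (forall n, (1 <= n)%N -> 0 <= t n <= 1) -> bounded_seq s ->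
  bounded_seq (fun n => s n + t n *: (s n - s n.-1)).
Proof.
move=> t01 /bounded_seq_norm_ub[B [_ sB]]; exists (3 * B) => n n1.
have /andP[t0 t1] := t01 n n1.
rewrite (le_trans (ler_normD _ _)) // normrZ ger0_norm //.
have := ler_normB (s n) (s n.-1); have := sB n; have := sB n.-1.
have := normr_ge0 (s n - s n.-1); nra.
Qed.

Lemma bounded_seq_damped_rec g t s :
  t @ \oo --> 0 -> bounded_seq g ->
  (forall n, (1 <= n)%N -> s n.+1 = g n + t n *: s n) -> bounded_seq s.
Proof.
move=> t0 /bounded_seq_norm_ub[G [G0 gG]] s_rec.
have [N _ tN] : \forall n \near \oo, `|t n| < 1 / 2.
  by apply: cvgr0_norm_lt t0 _ _; lra.
have [P [P0 sP]] := norm_prefix_ub s N.+1.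
have sK k : `|s (N.+1 + k)%N| <= P + 2 * G.
  elim: k => [|k IHk]; first by rewrite addn0 (le_trans (sP _ _)) ?lerDl ?mulr_ge0.
  rewrite addnS s_rec // (le_trans (ler_normD _ _)) // normrZ.
  have := tN (N.+1 + k)%N (leq_trans (leqnSn N) (leq_addr k _)).
  have := gG (N.+1 + k)%N; have := normr_ge0 (t (N.+1 + k)%N).
  have := normr_ge0 (s (N.+1 + k)%N); move: IHk => /=; nra.
exists (P + 2 * G) => n _; case: (leqP n N.+1) => nN.
  by rewrite (le_trans (sP _ nN)) ?lerDl ?mulr_ge0.
by rewrite -(subnKC (ltnW nN)) sK.
Qed.

End BoundedSequences.

Theorem lemma2 (R : realType) (H : completeNormedModType R) (ip : H -> H -> R)
  (M : nat)
  (f h : nat -> H -> R) (gh : nat -> H -> H) (L : nat -> R) (T : nat -> H -> H)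
  (theta lam beta alpha : nat -> R)
  (x : nat -> H) (w z d y : nat -> nat -> H) (u : nat -> H) :
  is_inner_product ip ->
  (* (A1) *)
  (forall i, (1 <= i <= M)%N -> continuous (f i) /\ convex_fun (f i)) ->
  (* (A2) *)
  (forall i, (1 <= i <= M)%N ->
     convex_fun (h i) /\ has_gradient ip (h i) (gh i) /\
     0 < L i /\ lipschitz_const (L i)^-1 (gh i)) ->
  (* (A3) *)
  (forall i, (1 <= i <= M)%N -> firmly_nonexpansive ip (T i)) ->
  (* (A4) *)
  (exists p : H, forall i, (1 <= i <= M)%N -> T i p = p) ->
  (exists xh : H, (forall i, (1 <= i <= M)%N -> T i xh = xh) /\
     forall q : H, (forall i, (1 <= i <= M)%N -> T i q = q) ->
       \sum_(1 <= i < M.+1) (f i xh + h i xh) <= \sum_(1 <= i < M.+1) (f i q + h i q)) ->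
  (* Condition (C) *)
  nonincr_seq theta -> nonincr_seq lam ->
  nonincr_seq beta -> nonincr_seq alpha ->
  theta @ \oo --> 0 -> lam @ \oo --> 0 -> beta @ \oo --> 0 -> alpha @ \oo --> 0 ->
  (forall n, (1 <= n)%N ->
     [/\ 0 <= theta n < 1,
         0 < lam n /\ (forall i, (1 <= i <= M)%N -> lam n <= 2 * L i),
         0 < beta n <= 1 & 0 < alpha n <= 1]) ->
  (* (C1) *) series alpha @ \oo --> +oo ->
  (* (C2) *) (fun n => (alpha n.+1)^-1 * `|(lam n.+1)^-1 - (lam n)^-1|) @ \oo --> 0 ->
  (* (C3) *) (fun n => (lam n.+1)^-1 * `|1 - alpha n / alpha n.+1|) @ \oo --> 0 ->
  (* (C4) *) (fun n => alpha n / lam n) @ \oo --> 0 ->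
  (* (C5) *) (fun n => theta n / (alpha n.+1 * lam n.+1)) @ \oo --> 0 ->
  (* (C6) *) (exists sigma : R, 1 <= sigma /\
                forall n, (1 <= n)%N -> lam n / lam n.+1 <= sigma) ->
  (* (C7) *) (fun n => beta n / alpha n.+1) @ \oo --> 0 ->
  (* the algorithm *)
  (forall i, (1 <= i <= M)%N -> d i 1%N = - gh i (z i 0%N)) ->
  (forall n, (1 <= n)%N -> w 1%N n = x n) ->
  (forall n i, (1 <= n)%N -> (1 <= i <= M)%N ->
     [/\ z i n = w i n + theta n *: (w i n - w i n.-1),
         d i n.+1 = - gh i (z i n) + beta n *: d i n,
         is_prox (lam n) (f i) (z i n + lam n *: d i n.+1) (y i n)
       & w i.+1 n = alpha n *: u i + (1 - alpha n) *: T i (y i n)]) ->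
  (forall n, (1 <= n)%N -> x n.+1 = w M.+1 n) ->
  (* boundedness assumption *)
  (forall i, (1 <= i <= M)%N -> bounded_seq (y i)) ->
  (forall i, (1 <= i <= M)%N -> bounded_seq (fun n => T i (y i n))) /\
  bounded_seq x /\
  (forall i, (1 <= i <= M)%N ->
     [/\ bounded_seq (w i), bounded_seq (z i) & bounded_seq (d i)]).
Proof.
move=> ipP _ A2 A3 _ _ _ _ _ _ _ _ beta0 _ par _ _ _ _ _ _ _ _ w1 alg x_next y_bd.
have theta01 n : (1 <= n)%N -> 0 <= theta n <= 1.
  by case/par => /andP[-> /ltW].
have alpha01 n : (1 <= n)%N -> 0 <= alpha n <= 1.
  by case/par => _ _ _ /andP[/ltW ->].
have Ty_bd i : (1 <= i <= M)%N -> bounded_seq (fun n => T i (y i n)).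
  move=> iM; exact: bounded_seq_lipschitz
    (firmly_nonexpansive_lipschitz ipP (A3 i iM)) (y_bd i iM).
have w_succ_bd i : (1 <= i <= M)%N -> bounded_seq (w i.+1).
  move=> iM; apply: eq_bounded_seq _
    (bounded_seq_convex_comb (u i) alpha01 (Ty_bd i iM)).
  by move=> n n1; case: (alg n i n1 iM).
have x_bd : bounded_seq x.
  case: (posnP M) => [M0 | M_gt0]; last first.
    by apply/bounded_seq_succ/(eq_bounded_seq x_next)/w_succ_bd; rewrite M_gt0 /=.
  have x_const n : x n.+1 = x 1%N by elim: n => // n <-; rewrite x_next // M0 w1.
  by exists `|x 1%N| => -[|n] // _; rewrite x_const.
have w_bd i : (1 <= i <= M)%N -> bounded_seq (w i).
  case: i => [|[|i]] // iM; first exact: eq_bounded_seq w1 x_bd.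
  by apply: w_succ_bd; lia.
have z_bd i : (1 <= i <= M)%N -> bounded_seq (z i).
  move=> iM; apply: eq_bounded_seq _
    (bounded_seq_extrapolate theta01 (w_bd i iM)).
  by move=> n n1; case: (alg n i n1 iM).
split=> //; split=> // i iM; split; [exact: w_bd | exact: z_bd |].
have [_ [_ [_ ghL]]] := A2 i iM.
apply: bounded_seq_damped_rec beta0
  (bounded_seqN (bounded_seq_lipschitz ghL (z_bd i iM))) _.
by move=> n n1; case: (alg n i n1 iM).
Qed.
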